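(* Let $k\ge 0$ and $n\ge 2k+2$ be integers and let $t_1<t_2<\dots<t_{n+1}$ be real numbers. Then there is $\lambda_0\in\mathbb R$ such that for every $\lambda\ge\lambda_0$ the polytope \[ P:=\mathrm{conv}\Big(\{(t_i,t_i^2,\dots,t_i^{2k+2})^T : i\in[n+1]\}\ \cup\ \{(t_i,t_i^2,\dots,t_i^{2k+1},\lambda-t_i^{2k+2})^T : i\in[n+1]\}\Big)\subset\mathbb R^{2k+2} \] is a $(k,(1,n))$-PSN polytope of dimension $2k+2$, i.e. its $k$-skeleton is combinatorially equivalent to that of $\Delta_1\times\Delta_n$.
   Context: $\Delta_m$ denotes the $m$-dimensional simplex. For $\mathbf n=(n_1,\dots,n_r)$ with $r\ge1$ and all $n_i\ge1$, $\Delta_{\mathbf n}:=\Delta_{n_1}\times\dots\times\Delta_{n_r}$. The $k$-skeleton of a polytope is the poset of its faces of dimension at most $k$; two $k$-skeleta are combinatorially equivalent if these posets are isomorphic. For $k\ge0$, a convex polytope is $(k,\mathbf n)$-PSN if its $k$-skeleton is combinatorially equivalent to that of $\Delta_{\mathbf n}$. *)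

From HB Require Import structures.
From mathcomp Require Import all_boot all_order all_algebra.
Set Implicit Arguments. Unset Strict Implicit. Unset Printing Implicit Defensive.
Import Order.TTheory GRing.Theory Num.Theory.
Local Open Scope ring_scope.

Section Polytopes.
Variable R : realFieldType.

Definition pset (d : nat) := 'rV[R]_d -> Prop.

Definition dotv (d : nat) (c x : 'rV[R]_d) : R := \sum_(i < d) c 0 i * x 0 i.

Definition conv (d : nat) (I : finType) (p : I -> 'rV[R]_d) : pset d :=
  fun x => exists w : I -> R,
    [/\ forall i, 0 <= w i, \sum_i w i = 1 & x = \sum_i w i *: p i].

(* F is a face of X: F = X ∩ {c.x = b} for a valid inequality c.x <= b of X
   (c = 0 allowed, giving X itself and the empty face). *)
Definition is_face (d : nat) (X F : pset d) : Prop :=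
  exists (c : 'rV[R]_d) (b : R),
    (forall x, X x -> dotv c x <= b) /\
    (forall x, F x <-> (X x /\ dotv c x = b)).

Definition aff_indep (d m : nat) (p : 'I_m.+1 -> 'rV[R]_d) : Prop :=
  \rank (\matrix_(i < m) (p (lift ord0 i) - p ord0)) = m.

Definition dim_le (d : nat) (X : pset d) (m : nat) : Prop :=
  ~ exists p : 'I_m.+2 -> 'rV[R]_d, (forall i, X (p i)) /\ aff_indep p.

Definition has_dim (d : nat) (X : pset d) (m : nat) : Prop :=
  (exists p : 'I_m.+1 -> 'rV[R]_d, (forall i, X (p i)) /\ aff_indep p)
  /\ dim_le X m.

(* F belongs to the k-skeleton of X: a face of X of dimension at most k
   (the empty face, of dimension -1, included) *)
Definition in_skel (d : nat) (k : nat) (X F : pset d) : Prop :=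
  is_face X F /\ dim_le F k.

Definition subset_p (d : nat) (F G : pset d) : Prop := forall x, F x -> G x.
Definition eq_p (d : nat) (F G : pset d) : Prop := forall x, F x <-> G x.

(* the k-skeleta of X and Y are combinatorially equivalent: there is a map
   between their faces of dimension <= k which is an order isomorphism of the
   face posets (ordered by inclusion), faces being sets up to extensional
   equality. *)
Definition skel_equiv (d e : nat) (k : nat) (X : pset d) (Y : pset e) : Prop :=
  exists f : pset d -> pset e,
    [/\ forall F, in_skel k X F -> in_skel k Y (f F),
        forall G, in_skel k Y G -> exists2 F, in_skel k X F & eq_p (f F) G
      & forall F1 F2, in_skel k X F1 -> in_skel k X F2 ->
          (subset_p F1 F2 <-> subset_p (f F1) (f F2))].

Definition simplex (m : nat) : pset m :=
  fun y => (forall i, 0 <= y 0 i) /\ \sum_(i < m) y 0 i <= 1.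

Definition prod_simplex (a b : nat) : pset (a + b) :=
  fun x => simplex (lsubmx x) /\ simplex (rsubmx x).

(* the 2(n+1) points of the proposition, indexed by bool * 'I_(n+1):
   (false,i) |-> (t_i, t_i^2, ..., t_i^(2k+2)),
   (true, i) |-> (t_i, ..., t_i^(2k+1), lam - t_i^(2k+2)). *)
Definition psn_points (k n : nat) (t : 'I_n.+1 -> R) (lam : R)
    (q : bool * 'I_n.+1) : 'rV[R]_(2 * k + 2) :=
  \row_(j < 2 * k + 2)
    (if q.1 && (j == (2 * k + 1)%N :> nat)
     then lam - t q.2 ^+ (2 * k + 2)
     else t q.2 ^+ j.+1).

End Polytopes.

From HB Require Import structures.
From mathcomp Require Import all_boot all_order all_algebra.
From mathcomp Require Import zify ring lra.
From Stdlib Require Import Classical.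
Import Order.TTheory GRing.Theory Num.Theory.
Local Open Scope ring_scope.
Set Implicit Arguments. Unset Strict Implicit. Unset Printing Implicit Defensive.

(* Both P and Δ_1 × Δ_n are hulls of families indexed by bool × 'I_(n+1), a
   "bottom" and a "top" level of n+1 vertices each.  Call S a small rectangle
   if S = E × J with |E| + |J| <= k+2.  For both families we prove that
   (a) the index set of every face of dimension <= k is a small rectangle and
   (b) every small rectangle indexes an exposed face of dimension <= k;
   [skel_equiv_of_good] then shows that two families sharing such a description
   have equivalent k-skeleta.
   For (a), the tight set of a valid inequality is a rectangle (for P because
   all vertical edges are parallel to the last axis, for the prism by the
   parallelogram identity), and a rectangle which is not small contains k+2
   affinely independent vertices; affine independence is checked by triangular
   systems of functionals, which for P come from polynomials with prescribed
   roots on the moment curve.  For (b), squares of such polynomials, corrected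
   by the last coordinate, expose the small rectangles of P once lam exceeds
   every 2 t_i^(2k+2); the file ends with Δ_1 × Δ_n = conv of its vertices. *)

Section Convexity.
Variable R : realFieldType.

Lemma dotvD d (c x y : 'rV[R]_d) : dotv c (x + y) = dotv c x + dotv c y.
Proof. by rewrite /dotv -big_split; apply: eq_bigr => i _; rewrite mxE mulrDr. Qed.

Lemma dotvZ d (c x : 'rV[R]_d) a : dotv c (a *: x) = a * dotv c x.
Proof. by rewrite /dotv mulr_sumr; apply: eq_bigr => i _; rewrite mxE mulrCA. Qed.

Lemma dotvB d (c x y : 'rV[R]_d) : dotv c (x - y) = dotv c x - dotv c y.
Proof. by rewrite dotvD -scaleN1r dotvZ mulN1r. Qed.

Lemma dotv0 d (c : 'rV[R]_d) : dotv c 0 = 0.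
Proof. by rewrite /dotv big1 // => i _; rewrite mxE mulr0. Qed.

Lemma dotv0l d (x : 'rV[R]_d) : dotv 0 x = 0.
Proof. by rewrite /dotv big1 // => i _; rewrite mxE mul0r. Qed.

Lemma dotv_sum d (I : finType) (c : 'rV[R]_d) (F : I -> 'rV[R]_d) :
  dotv c (\sum_i F i) = \sum_i dotv c (F i).
Proof.
rewrite /dotv; under eq_bigr do rewrite summxE mulr_sumr.
exact: exchange_big.
Qed.

Lemma dotv_row_mx d1 d2 (c1 x1 : 'rV[R]_d1) (c2 x2 : 'rV[R]_d2) :
  dotv (row_mx c1 c2) (row_mx x1 x2) = dotv c1 x1 + dotv c2 x2.
Proof.
rewrite /dotv big_split_ord /=; congr (_ + _); apply: eq_bigr => i _.
  by rewrite !row_mxEl.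
by rewrite !row_mxEr.
Qed.

Lemma sum_mul_delta (I : finType) (F : I -> R) (i : I) : \sum_j F j * (j == i)%:R = F i.
Proof. by rewrite (bigD1 i) //= eqxx mulr1 big1 ?addr0 // => j /negbTE ->; rewrite mulr0. Qed.

Lemma sum_delta (I : finType) (i : I) : \sum_j ((j == i)%:R : R) = 1.
Proof. by rewrite (bigD1 i) //= eqxx big1 ?addr0 // => j /negbTE ->. Qed.

Lemma aff_indep_triangular d m (x : 'I_m.+1 -> 'rV[R]_d) (phi : 'I_m -> 'rV[R]_d) :
  (forall l l' : 'I_m, (l < l')%N -> dotv (phi l) (x (lift ord0 l') - x ord0) = 0) ->
  (forall l, dotv (phi l) (x (lift ord0 l) - x ord0) != 0) -> aff_indep x.
Proof.
move=> phi_up phi_diag; apply/eqP; apply: inj_row_free => v vM0.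
have eq_l l : \sum_(l' < m) v 0 l' * dotv (phi l) (x (lift ord0 l') - x ord0) = 0.
  rewrite -[RHS](dotv0 (phi l)) -vM0 mulmx_sum_row dotv_sum.
  by apply: eq_bigr => i _; rewrite dotvZ rowK.
(* solve the triangular system v = 0 coordinate by coordinate *)
suff v0 N (l : 'I_m) : (l < N)%N -> v 0 l = 0.
  by apply/rowP => l; rewrite mxE (v0 l.+1).
elim: N l => [//|N IH] l; rewrite ltnS leq_eqVlt => /orP[/eqP lN|]; last exact: IH.
move/eqP: (eq_l l); rewrite (bigD1 l) //= big1 ?addr0.
  by rewrite mulf_eq0 (negbTE (phi_diag l)) orbF => /eqP.
move=> l' l'l; case: (ltngtP l' l) => [lt|gt|eq].
- by rewrite IH ?mul0r // -lN.
- by rewrite phi_up ?mulr0.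
- by move: l'l; rewrite (val_inj eq) eqxx.
Qed.

(* A subset of R^d containing d+1 affinely independent points has dimension
   d: no d+2 points of R^d are affinely independent. *)
Lemma has_dim_full d (X : pset R d) (p : 'I_d.+1 -> 'rV[R]_d) :
  (forall i, X (p i)) -> aff_indep p -> has_dim X d.
Proof.
move=> Xp ind; split; first by exists p.
move=> [q [_ indq]]; move: (rank_leq_col (\matrix_(i < d.+1) (q (lift ord0 i) - q ord0))).
by rewrite indq ltnn.
Qed.

Definition conv_on d (I : finType) (p : I -> 'rV[R]_d) (S : I -> Prop) : pset R d :=
  fun x => exists w : I -> R, [/\ forall i, 0 <= w i, forall i, ~ S i -> w i = 0,
     \sum_i w i = 1 & x = \sum_i w i *: p i].

Section ConvOn.
Variables (d : nat) (I : finType) (p : I -> 'rV[R]_d).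

Lemma conv_on_mono (S1 S2 : I -> Prop) : (forall i, S1 i -> S2 i) ->
  subset_p (conv_on p S1) (conv_on p S2).
Proof.
move=> S12 x [w [w0 wS w1 ->]]; exists w; split=> // i nS2.
by apply: wS => /S12.
Qed.

Lemma conv_on_ext (S1 S2 : I -> Prop) : (forall i, S1 i <-> S2 i) ->
  eq_p (conv_on p S1) (conv_on p S2).
Proof. by move=> S12 x; split; apply: conv_on_mono => i /S12. Qed.

Lemma conv_on_empty (S : I -> Prop) : (forall i, ~ S i) -> forall x, ~ conv_on p S x.
Proof.
move=> S0 x [w [_ wS w1 _]].
by move/eqP: w1; rewrite big1 ?(eq_sym 0) ?oner_eq0 // => i _; apply: wS.
Qed.

Lemma sum_delta_scale (i : I) : \sum_j (j == i)%:R *: p j = p i.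
Proof.
rewrite (bigD1 i) //= eqxx scale1r big1 ?addr0 // => j /negbTE ->.
by rewrite scale0r.
Qed.

Lemma conv_on_pt (S : I -> Prop) i : S i -> conv_on p S (p i).
Proof.
move=> Si; exists (fun j => (j == i)%:R); split.
- by move=> j; rewrite ler0n.
- by move=> j nSj; case: eqP => // ji; case: nSj; rewrite ji.
- exact: sum_delta.
- by rewrite sum_delta_scale.
Qed.

Lemma conv_pt i : conv p (p i).
Proof.
by exists (fun j => (j == i)%:R); rewrite sum_delta sum_delta_scale; split=> // j; rewrite ler0n.
Qed.

Lemma dotv_comb c (w : I -> R) :
  dotv c (\sum_i w i *: p i) = \sum_i w i * dotv c (p i).
Proof. by rewrite dotv_sum; apply: eq_bigr => i _; rewrite dotvZ. Qed.

Lemma conv_le c b : (forall i, dotv c (p i) <= b) ->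
  forall x, conv p x -> dotv c x <= b.
Proof.
move=> cb x [w [w0 w1 ->]]; rewrite dotv_comb.
apply: (@le_trans _ _ (\sum_i w i * b)); first by apply: ler_sum => i _; apply: ler_wpM2l.
by rewrite -mulr_suml w1 mul1r.
Qed.

Lemma exposed_face_conv_on c b : (forall i, dotv c (p i) <= b) ->
  forall x, (conv p x /\ dotv c x = b) <-> conv_on p (fun i => dotv c (p i) = b) x.
Proof.
move=> cb x; split.
- case=> [[w [w0 w1 ->]]]; rewrite dotv_comb => tight.
  exists w; split=> // i loose.
  have slack0 : \sum_i w i * (b - dotv c (p i)) = 0.
    under eq_bigr do rewrite mulrBr.
    by rewrite sumrB -mulr_suml w1 mul1r tight subrr.
  have /eqP : w i * (b - dotv c (p i)) = 0.
    by apply: (psumr_eq0P _ slack0) => // j _; rewrite mulr_ge0 ?subr_ge0.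
  by rewrite mulf_eq0 subr_eq0 => /orP[/eqP //|/eqP bi]; case: loose.
- case=> w [w0 wS w1 ->]; split; first by exists w.
  rewrite dotv_comb (eq_bigr (fun i => w i * b)); first by rewrite -mulr_suml w1 mul1r.
  move=> i _; case: (dotv c (p i) =P b) => [-> //|loose].
  by rewrite wS // !mul0r.
Qed.

Lemma conv_on_dim_le (S : I -> Prop) m (x0 : 'rV[R]_d) r (V : 'M[R]_(r, d)) :
  (forall i, S i -> (p i - x0 <= V)%MS) -> (\rank V <= m)%N ->
  dim_le (conv_on p S) m.
Proof.
move=> SV rkV [q [Sq indq]].
have hullV y : conv_on p S y -> (y - x0 <= V)%MS.
  case=> w [w0 wS w1 ->].
  have -> : \sum_i w i *: p i - x0 = \sum_i w i *: (p i - x0).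
    under [RHS]eq_bigr do rewrite scalerBr.
    by rewrite sumrB -scaler_suml w1 scale1r.
  apply: summx_sub => i _; case: (classic (S i)) => [/SV Vi|nSi].
    exact: scalemx_sub.
  by rewrite wS // scale0r sub0mx.
have MV : (\matrix_(i < m.+1) (q (lift ord0 i) - q ord0) <= V)%MS.
  apply/row_subP => i; rewrite rowK.
  have -> : q (lift ord0 i) - q ord0 = (q (lift ord0 i) - x0) + (-1) *: (q ord0 - x0).
    by rewrite scaleN1r opprB addrA subrK.
  by apply: addmx_sub; [|apply: scalemx_sub]; apply: hullV.
by move: (leq_trans (mxrankS MV) rkV); rewrite indq ltnn.
Qed.

End ConvOn.

Lemma dim_le_ext d (X Y : pset R d) m : eq_p X Y -> dim_le X m -> dim_le Y m.
Proof. by move=> XY dimX [q [Yq indq]]; apply: dimX; exists q; split=> // i; apply/XY. Qed.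

Lemma in_skel_ext d m (X X' F F' : pset R d) : eq_p X X' -> eq_p F F' ->
  in_skel m X F -> in_skel m X' F'.
Proof.
move=> XX' FF' [[c [b [valid cutF]]] dimF]; split; last exact: dim_le_ext dimF.
exists c, b; split=> [x /XX'|x]; first exact: valid.
by rewrite -FF' cutF XX'.
Qed.

End Convexity.
Arguments conv_on_mono {R d I p S1 S2}.
Arguments conv_on_ext {R d I p S1 S2}.

(* S is the set of indices of the points on which some valid inequality is
   tight, i.e. the hull of these points is an exposed face. *)
Definition exposes (R : realFieldType) d (I : finType) (p : I -> 'rV[R]_d) (S : I -> Prop) : Prop :=
  exists c b, (forall i, dotv c (p i) <= b) /\ (forall i, dotv c (p i) = b <-> S i).

Lemma exposes_empty (R : realFieldType) d (I : finType) (p : I -> 'rV[R]_d) (S : I -> Prop) :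
  (forall i, ~ S i) -> exposes p S.
Proof.
move=> S0; exists 0, 1; split=> i; rewrite dotv0l ?ler01 //.
by split=> [/eqP|/S0 //]; rewrite eq_sym oner_eq0.
Qed.

Section Skeleton.
Variables (R : realFieldType) (I : finType) (m : nat) (good : (I -> Prop) -> Prop).

(* [good] describes the m-skeleton of conv p when (1) the tight set of every
   valid inequality cutting out a face of dimension <= m is good, and (2) every
   good set is the tight set of a valid inequality and spans dimension <= m. *)
Definition faces_good d (p : I -> 'rV[R]_d) : Prop :=
  forall c b, (forall i, dotv c (p i) <= b) ->
  dim_le (conv_on p (fun i => dotv c (p i) = b)) m -> good (fun i => dotv c (p i) = b).

Definition good_faces d (p : I -> 'rV[R]_d) : Prop :=
  forall S, good S -> exposes p S /\ dim_le (conv_on p S) m.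

Section OneFamily.
Variables (d : nat) (p : I -> 'rV[R]_d).

Lemma good_in_skel S : good_faces p -> good S -> in_skel m (conv p) (conv_on p S).
Proof.
move=> gfp gS; have [[c [b [valid tightS]]] dimS] := gfp S gS; split=> //.
exists c, b; split; first exact: conv_le.
move=> x; rewrite exposed_face_conv_on //; move: x.
by apply: conv_on_ext => i; rewrite tightS.
Qed.

Lemma good_face_vertex S : good_faces p -> good S ->
  forall i, conv_on p S (p i) <-> S i.
Proof.
move=> gfp gS i; split; last exact: conv_on_pt.
have [[c [b [valid tightS]]] _] := gfp S gS.
move/(conv_on_ext (fun j => iff_sym (tightS j))).
by move/(exposed_face_conv_on valid) => [_ /tightS].
Qed.

Lemma skel_face_index F : faces_good p -> in_skel m (conv p) F ->
  exists S, [/\ good S, eq_p F (conv_on p S) & forall i, F (p i) <-> S i].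
Proof.
move=> fgp [[c [b [valid cutF]]] dimF].
have valid_pt i : dotv c (p i) <= b by apply/valid/conv_pt.
have EF : eq_p F (conv_on p (fun i => dotv c (p i) = b)).
  by move=> x; rewrite cutF exposed_face_conv_on.
exists (fun i => dotv c (p i) = b); split=> //.
- by apply: fgp => //; apply: dim_le_ext dimF.
- by move=> i; rewrite cutF; split=> [[]//|]; split=> //; apply: conv_pt.
Qed.

End OneFamily.

Lemma skel_equiv_of_good d e (p : I -> 'rV[R]_d) (q : I -> 'rV[R]_e) (Y : pset R e) :
  faces_good p -> good_faces p -> faces_good q -> good_faces q -> eq_p (conv q) Y ->
  skel_equiv m (conv p) Y.
Proof.
move=> fgp gfp fgq gfq qY.
exists (fun F => conv_on q (fun i => F (p i))); split.
- move=> F /(skel_face_index fgp) [S [gS _ FS]].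
  apply: (in_skel_ext qY (conv_on_ext (fun i => iff_sym (FS i)))).
  exact: good_in_skel.
- move=> G skelG.
  have skelG' : in_skel m (conv q) G.
    by apply: (in_skel_ext _ _ skelG) => // x; split=> /qY.
  have [S [gS EG _]] := skel_face_index fgq skelG'.
  exists (conv_on p S); first exact: good_in_skel.
  move=> x; rewrite EG; apply: conv_on_ext => i; exact: good_face_vertex.
- move=> F1 F2 /(skel_face_index fgp) [S1 [gS1 E1 FS1]] /(skel_face_index fgp) [S2 [gS2 E2 FS2]].
  split=> [F12|G12 x /E1 x1]; first by apply: conv_on_mono => i /F12.
  apply/E2; move: x1; apply: conv_on_mono => i /FS1 S1i.
  have : conv_on q (fun j => F2 (p j)) (q i) by apply/G12/conv_on_pt.
  by move/(conv_on_ext FS2)/(good_face_vertex gfq gS2).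
Qed.

End Skeleton.

(* S is a product E × J with |E| + |J| <= k + 2: this is the index set of a
   face of Δ_1 × Δ_n of dimension at most k (the empty face included). *)
Definition small_rect (k n : nat) (S : bool * 'I_n.+1 -> Prop) : Prop :=
  exists (E : {set bool}) (J : {set 'I_n.+1}),
    (#|E| + #|J| <= k.+2)%N /\ forall e j, S (e, j) <-> (e \in E /\ j \in J).

Lemma empty_small_rect k n (S : bool * 'I_n.+1 -> Prop) :
  (forall i, ~ S i) -> small_rect k S.
Proof.
move=> S0; exists set0, set0; rewrite !cards0; split=> // e j.
by rewrite !inE; split=> [/S0|[]].
Qed.

Definition inj_upto (n : nat) (s : nat -> 'I_n.+1) (N : nat) : Prop :=
  forall l l', (l < N)%N -> (l' < N)%N -> s l = s l' -> l = l'.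

Lemma inj_upto_eq n (s : nat -> 'I_n.+1) N a b : inj_upto s N -> (a < N)%N -> (b < N)%N ->
  (s a == s b) = (a == b).
Proof. by move=> s_inj aN bN; apply/eqP/eqP => [/(s_inj _ _ aN bN)|->]. Qed.

Definition enum_nth n (J : {set 'I_n.+1}) (l : nat) : 'I_n.+1 := nth ord0 (enum J) l.

Lemma mem_enum_nth n (J : {set 'I_n.+1}) l : (l < #|J|)%N -> enum_nth J l \in J.
Proof. by move=> lJ; rewrite -mem_enum mem_nth // -cardE. Qed.

Lemma enum_nth_inj n (J : {set 'I_n.+1}) : inj_upto (enum_nth J) #|J|.
Proof. by move=> l l' lJ l'J /eqP; rewrite nth_uniq ?enum_uniq -?cardE // => /eqP. Qed.

Section Rectangles.
Variables (R : realFieldType) (d k n : nat) (pt : bool * 'I_n.+1 -> 'rV[R]_d).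

Definition level_indep : Prop :=
  forall e s, inj_upto s k.+2 -> aff_indep (fun l : 'I_k.+2 => pt (e, s l)).

Definition corner_indep : Prop :=
  forall s, inj_upto s k.+1 -> aff_indep (fun l : 'I_k.+2 =>
    if l == k.+1 :> nat then pt (true, s 0%N) else pt (false, s l)).

(* A rectangle spanning dimension at most k is small, as a larger one contains
   k+2 points in one of the two independent configurations above. *)
Lemma rect_dim_le_small (S : bool * 'I_n.+1 -> Prop) (E : {set bool}) (J : {set 'I_n.+1}) :
  level_indep -> corner_indep -> (forall e j, S (e, j) <-> (e \in E /\ j \in J)) ->
  dim_le (conv_on pt S) k -> small_rect k S.
Proof.
move=> lev cor SEJ dimS.
case: (leqP (#|E| + #|J|) k.+2) => [small|big]; first by exists E, J.
case: (posnP #|E|) => [/eqP|E_gt0].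
  by rewrite cards_eq0 => /eqP E0; apply: empty_small_rect => -[e j] /SEJ[]; rewrite E0 inE.
case: (posnP #|J|) => [/eqP|J_gt0].
  by rewrite cards_eq0 => /eqP J0; apply: empty_small_rect => -[e j] /SEJ[_]; rewrite J0 inE.
have [e0 e0E] := card_gt0P E_gt0.
pose s := enum_nth J.
have sJ l : (l < #|J|)%N -> S (e0, s l) by move=> lJ; apply/SEJ; rewrite mem_enum_nth.
case: dimS; case: (leqP #|E| 1) => E1.
- exists (fun l : 'I_k.+2 => pt (e0, s l)); split.
    by move=> l; apply/conv_on_pt/sJ; have := ltn_ord l; lia.
  by apply: lev => l l' *; apply: (@enum_nth_inj _ J l l') => //; lia.
- have allE b : b \in E.
    have : E == setT by rewrite eqEcard subsetT cardsT card_bool.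
    by move/eqP ->; rewrite inE.
  have E2 : (#|E| <= 2)%N by rewrite -card_bool max_card.
  exists (fun l : 'I_k.+2 =>
    if l == k.+1 :> nat then pt (true, s 0%N) else pt (false, s l)); split.
    move=> l; case: ifP => lk; apply: conv_on_pt; apply/SEJ; rewrite allE mem_enum_nth //.
    by have := ltn_ord l; move/negbT: lk; lia.
  by apply: cor => l l' *; apply: (@enum_nth_inj _ J l l') => //; lia.
Qed.

Lemma faces_good_of_rect : level_indep -> corner_indep ->
  (forall c b, (forall i, dotv c (pt i) <= b) -> exists (E : {set bool}) (J : {set 'I_n.+1}),
     forall e j, dotv c (pt (e, j)) = b <-> (e \in E /\ j \in J)) ->
  faces_good k (@small_rect k n) pt.
Proof.
move=> lev cor rect c b valid; have [E [J SEJ]] := rect c b valid.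
exact: rect_dim_le_small SEJ.
Qed.

Definition diff_mx (f : 'I_n.+1 -> 'rV[R]_d) (J : {set 'I_n.+1}) : 'M[R]_(#|J|.-1, d) :=
  \matrix_(l < #|J|.-1) (f (enum_nth J l.+1) - f (enum_nth J 0)).

Lemma diff_mx_sub (f : 'I_n.+1 -> 'rV[R]_d) (J : {set 'I_n.+1}) j : j \in J ->
  (f j - f (enum_nth J 0) <= diff_mx f J)%MS.
Proof.
rewrite /diff_mx /enum_nth -mem_enum => jJ.
have lJ : (index j (enum J) < #|J|)%N by rewrite cardE index_mem.
rewrite -{1}(nth_index ord0 jJ); move: lJ.
case: (index j (enum J)) => [|l] lJ; first by rewrite subrr sub0mx.
have l_lt : (l < #|J|.-1)%N by lia.
by apply: (eq_row_sub (Ordinal l_lt)); rewrite rowK.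
Qed.

Lemma small_rect_dim_le (w : 'rV[R]_d) (S : bool * 'I_n.+1 -> Prop) :
  (forall j, (pt (true, j) - pt (false, j) <= w)%MS) -> small_rect k S ->
  dim_le (conv_on pt S) k.
Proof.
move=> vert [E [J [small SEJ]]].
case: (posnP #|E|) => [E0|E_gt0].
  move=> [q [Sq _]]; apply: (conv_on_empty _ (Sq ord0)) => -[e j] /SEJ[eE _].
  by move: (card0_eq E0 e); rewrite eE.
case: (posnP #|J|) => [J0|J_gt0].
  move=> [q [Sq _]]; apply: (conv_on_empty _ (Sq ord0)) => -[e j] /SEJ[_ jJ].
  by move: (card0_eq J0 j); rewrite jJ.
have [e0 e0E] := card_gt0P E_gt0.
set j0 := enum_nth J 0.
case: (leqP #|E| 1) => E1.
-
  apply: (conv_on_dim_le (x0 := pt (e0, j0)) (V := diff_mx (fun j => pt (e0, j)) J)).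
    move=> [e j] /SEJ[eE jJ]; have -> : e = e0 by move/card_le1_eqP: E1; apply.
    exact: (diff_mx_sub (fun j => pt (e0, j))).
  by apply: leq_trans (rank_leq_row _) _; lia.
- (* two levels: add the common vertical direction w *)
  have E2 : (#|E| <= 2)%N by rewrite -card_bool max_card.
  set V := diff_mx (fun j => pt (false, j)) J.
  apply: (conv_on_dim_le (x0 := pt (false, j0)) (V := (V + w)%MS)).
    have bottom j : j \in J -> (pt (false, j) - pt (false, j0) <= V + w)%MS.
      by move=> jJ; apply: submx_trans (addsmxSl _ _); apply: (diff_mx_sub (fun j => pt (false, j))).
    move=> [[] j] /SEJ[_ jJ]; last exact: bottom.
    rewrite -[pt (true, j)](subrK (pt (false, j))) -addrA.
    by apply: addmx_sub; [apply: submx_trans (addsmxSr _ _)|apply: bottom].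
  apply: leq_trans (leq_of_leqif (mxrank_adds_leqif _ _)) _.
  by have := rank_leq_row V; have := rank_leq_row w; lia.
Qed.

Lemma expose_rect (c : 'rV[R]_d) b (g : 'I_n.+1 -> R) (h : bool -> 'I_n.+1 -> R)
    (E : {set bool}) (J : {set 'I_n.+1}) (S : bool * 'I_n.+1 -> Prop) :
  (forall j, 0 <= g j) -> (forall j, g j = 0 <-> j \in J) ->
  (forall e j, 0 <= h e j) -> (forall e j, h e j = 0 <-> e \in E) ->
  (forall e j, dotv c (pt (e, j)) = b - g j - h e j) ->
  (forall e j, S (e, j) <-> e \in E /\ j \in J) ->
  (forall i, dotv c (pt i) <= b) /\ (forall i, dotv c (pt i) = b <-> S i).
Proof.
move=> g0 gJ h0 hE slack SEJ; split=> -[e j]; rewrite slack -addrA -opprD.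
  by rewrite gerBl addr_ge0.
split; last by case/SEJ => /hE -> /gJ ->; rewrite addr0 subr0.
move/eqP; rewrite -subr_eq0 addrAC subrr add0r oppr_eq0 paddr_eq0 //.
by case/andP => /eqP/gJ jJ /eqP/hE eE; apply/SEJ.
Qed.

Lemma good_faces_of_expose (w : 'rV[R]_d) :
  (forall j, (pt (true, j) - pt (false, j) <= w)%MS) ->
  (forall (J : {set 'I_n.+1}) (S : bool * 'I_n.+1 -> Prop), (#|J| <= k)%N ->
     (forall e j, S (e, j) <-> e \in [set: bool] /\ j \in J) -> exposes pt S) ->
  (forall (e0 : bool) (J : {set 'I_n.+1}) (S : bool * 'I_n.+1 -> Prop), (#|J| <= k.+1)%N ->
     (forall e j, S (e, j) <-> e \in [set e0] /\ j \in J) -> exposes pt S) ->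
  good_faces k (@small_rect k n) pt.
Proof.
move=> vert expose_both expose_level S small.
split; last exact: small_rect_dim_le vert small.
case: small => E [J [card_EJ SEJ]].
case: (boolP (true \in E)) => tE; case: (boolP (false \in E)) => fE.
- have E_T : E = setT by apply/setP => -[]; rewrite inE.
  rewrite E_T cardsT card_bool in card_EJ SEJ.
  by apply: (expose_both J) => //; lia.
- have E_1 : E = [set true] by apply/setP => -[]; rewrite inE ?(negbTE fE).
  by rewrite E_1 cards1 in card_EJ SEJ; apply: (expose_level _ J).
- have E_1 : E = [set false] by apply/setP => -[]; rewrite inE ?(negbTE tE).
  by rewrite E_1 cards1 in card_EJ SEJ; apply: (expose_level _ J).
- apply: exposes_empty => -[e j] /SEJ[].
  by case: e; rewrite ?(negbTE tE) ?(negbTE fE).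
Qed.

End Rectangles.

Section MomentPolytope.
Variables (R : realFieldType) (k n : nat) (t : 'I_n.+1 -> R) (lam : R).
Local Notation pt := (psn_points k t lam).

(* The functional x |-> q_1 x_1 + ... + q_(2k+1) x_(2k+1) + mu x_(2k+2), which
   evaluates q on the moment curve. *)
Definition poly_functional (q : {poly R}) (mu : R) : 'rV[R]_(2 * k + 2) :=
  \row_(i < 2 * k + 2) (if i == (2 * k + 1)%N :> nat then mu else q`_i.+1).

Lemma dot_poly_functional (q : {poly R}) (mu : R) (e : bool) (j : 'I_n.+1) : (size q <= (2 * k + 2).+1)%N ->
  dotv (poly_functional q mu) (pt (e, j)) = q.[t j] - q`_0 - q`_(2 * k + 2) * t j ^+ (2 * k + 2)
    + mu * (if e then lam - t j ^+ (2 * k + 2) else t j ^+ (2 * k + 2)).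
Proof.
move=> size_q; rewrite /dotv.
pose G (i : nat) := (if i == (2 * k + 1)%N then mu else q`_i.+1) *
   (if e && (i == (2 * k + 1)%N) then lam - t j ^+ (2 * k + 2) else t j ^+ i.+1).
rewrite (eq_bigr (fun i : 'I_(2 * k + 2) => G i)); last by move=> i _; rewrite !mxE.
rewrite -(big_mkord xpredT G) (horner_coef_wide _ size_q).
rewrite -(big_mkord xpredT (fun i => q`_i * t j ^+ i)) big_nat_recl // expr0 mulr1.
rewrite (_ : (2 * k + 2 = (2 * k + 1).+1)%N); last by rewrite addnS.
rewrite !big_nat_recr //= /G eqxx andbT.
rewrite (eq_big_nat _ _ (F2 := fun i => q`_i.+1 * t j ^+ i.+1)); last first.
  by move=> i /andP[_ ik]; rewrite ltn_eqF // andbF.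
rewrite (_ : (2 * k + 2 = (2 * k + 1).+1)%N) ?addnS //.
by set T := t j ^+ _.+1; set s := \sum_(_ <= _ < _) _; clear G; case: e; ring.
Qed.

Lemma dot_poly_functional_top (q : {poly R}) (e : bool) (j : 'I_n.+1) :
  (size q <= (2 * k + 2).+1)%N -> (e -> (size q <= 2 * k + 2)%N) ->
  dotv (poly_functional q q`_(2 * k + 2)) (pt (e, j)) = q.[t j] - q`_0.
Proof.
move=> size_q size_qe; rewrite dot_poly_functional //; case: e size_qe => [/(_ isT) sq|_].
  by rewrite (nth_default 0 sq) !mul0r subr0 addr0.
by rewrite subrK.
Qed.

Lemma dot_poly_functional_low (q : {poly R}) (e : bool) (j : 'I_n.+1) :
  (size q <= 2 * k + 2)%N -> dotv (poly_functional q 0) (pt (e, j)) = q.[t j] - q`_0.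
Proof.
move=> sq; rewrite -{1}(nth_default 0 sq); apply: dot_poly_functional_top => //.
exact: leqW.
Qed.

(* the last coordinate direction, along which the two levels differ *)
Definition vertical : 'rV[R]_(2 * k + 2) := poly_functional 0 1.

Lemma dot_vertical (e : bool) (j : 'I_n.+1) :
  dotv vertical (pt (e, j)) = if e then lam - t j ^+ (2 * k + 2) else t j ^+ (2 * k + 2).
Proof. by rewrite dot_poly_functional ?size_poly0 // horner0 !coef0; ring. Qed.

Lemma psn_vertical_edge j :
  pt (true, j) = pt (false, j) + (lam - 2 * t j ^+ (2 * k + 2)) *: vertical.
Proof.
apply/rowP => i; rewrite !mxE /=; case: eqP => [->|_]; last by rewrite coef0 mulr0 addr0.
by rewrite -addnS; ring.
Qed.

Hypothesis t_inj : injective t.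

Definition omit_poly (s : nat -> 'I_n.+1) (M l : nat) : {poly R} :=
  \prod_(x <- [seq t (s m) | m <- rem l (iota 0 M)]) ('X - x%:P).

Lemma size_omit_poly s M l : (l < M)%N -> size (omit_poly s M l) = M.
Proof.
move=> lM; rewrite size_prod_XsubC size_map size_rem ?mem_iota // size_iota.
by rewrite prednK // (leq_ltn_trans _ lM).
Qed.

Lemma omit_poly_root s M l a : inj_upto s M -> (a < M)%N ->
  ((omit_poly s M l).[t (s a)] == 0) = (a != l).
Proof.
move=> s_inj aM; rewrite -/(root _ _) root_prod_XsubC.
have mem_rem m : (m \in rem l (iota 0 M)) = (m != l) && (m < M)%N.
  by rewrite mem_rem_uniq ?iota_uniq // inE mem_iota add0n.
apply/mapP/idP => [[m + /t_inj sas]|al]; last by exists a; rewrite // mem_rem al.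
by rewrite mem_rem => /andP[ml mM]; rewrite (s_inj _ _ aM mM sas).
Qed.

Lemma psn_level_indep_gen M (e : bool) (s : nat -> 'I_n.+1) : (M <= 2 * k + 2)%N ->
  (e -> (M <= 2 * k + 1)%N) -> inj_upto s M.+1 ->
  aff_indep (fun l : 'I_M.+1 => pt (e, s l)).
Proof.
move=> M_le M_le_e s_inj.
pose Q (l : 'I_M) := omit_poly s M.+1 l.+1.
have size_Q (l : 'I_M) : size (Q l) = M.+1 by rewrite size_omit_poly // ltnS.
have phiQ (l l' : 'I_M) : dotv (poly_functional (Q l) (Q l)`_(2 * k + 2))
    (pt (e, s (lift ord0 l')) - pt (e, s ord0)) = (Q l).[t (s l'.+1)].
  have size_Ql : (size (Q l) <= (2 * k + 2).+1)%N by rewrite size_Q.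
  have size_Ql_top : e -> (size (Q l) <= 2 * k + 2)%N by rewrite size_Q => /M_le_e; lia.
  rewrite dotvB !dot_poly_functional_top //.
  have /eqP -> : (Q l).[t (s 0%N)] == 0 by rewrite omit_poly_root.
  by rewrite sub0r opprK subrK.
apply: (aff_indep_triangular (phi := fun l => poly_functional (Q l) (Q l)`_(2 * k + 2))).
- by move=> l l' ll'; apply/eqP; rewrite phiQ omit_poly_root // ?ltnS // eqSS neq_ltn ll' orbT.
- by move=> l; rewrite phiQ omit_poly_root ?ltnS // eqxx.
Qed.

Lemma psn_level_indep : level_indep k pt.
Proof. by move=> e s s_inj; apply: psn_level_indep_gen => // [|_]; lia. Qed.

(* P is full-dimensional: 2k+3 bottom vertices are affinely independent. *)
Lemma psn_has_dim : (2 * k + 2 <= n)%N -> has_dim (conv pt) (2 * k + 2).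
Proof.
move=> kn; apply: (has_dim_full (p := fun l : 'I_(2 * k + 2).+1 => pt (false, inord l))).
  by move=> l; apply: conv_pt.
apply: (psn_level_indep_gen (s := fun m => inord m)) => // l l' lk l'k /(congr1 (@nat_of_ord _)).
by rewrite !inordK //; lia.
Qed.

Hypothesis lam_large : forall j, 2 * t j ^+ (2 * k + 2) < lam.

Lemma psn_edge_length (j : 'I_n.+1) : 0 < lam - 2 * t j ^+ (2 * k + 2).
Proof. by rewrite subr_gt0. Qed.

(* k+1 bottom vertices and one top vertex are independent because the
   vertical edge is not in the span of the bottom level. *)
Lemma psn_corner_indep : corner_indep k pt.
Proof.
move=> s s_inj.
pose Q (l : 'I_k.+1) := omit_poly s k.+1 l.+1.
have size_Q (l : 'I_k.+1) : (l < k)%N -> (size (Q l) <= 2 * k + 2)%N.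
  by move=> lk; rewrite size_omit_poly //; lia.
have Q0 l : (Q l).[t (s 0%N)] = 0 by apply/eqP; rewrite omit_poly_root.
(* phi_l evaluates Q l for l < k and measures the vertical edge for l = k *)
apply: (aff_indep_triangular (phi := fun l : 'I_k.+1 =>
  if (l < k)%N then poly_functional (Q l) 0 else vertical)).
- move=> l l' ll'; have lk : (l < k)%N by apply: leq_trans ll' (ltn_ord l').
  have size_Ql := size_Q l lk; rewrite lift0 /= lk eqSS.
  case: eqP => [_|/eqP l'k]; rewrite dotvB !dot_poly_functional_low //; first by rewrite subrr.
  rewrite Q0 sub0r opprK subrK; apply/eqP; rewrite omit_poly_root //.
    by rewrite eqSS neq_ltn ll' orbT.
  by have := ltn_ord l'; lia.
- move=> l; rewrite lift0 /= eqSS; case: ifP => lk.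
    have size_Ql := size_Q l lk.
    rewrite (ltn_eqF lk) dotvB !dot_poly_functional_low // Q0 sub0r opprK subrK.
    by rewrite omit_poly_root ?eqxx.
  have -> : l == k :> nat by have := ltn_ord l; move/negbT: lk; lia.
  rewrite dotvB !dot_vertical; apply: lt0r_neq0.
  by have := psn_edge_length (s 0%N); congr (0 < _); ring.
Qed.

(* Since all vertical edges point along [vertical] with positive length, the
   tight set of a valid inequality is a rectangle: one level or both. *)
Lemma psn_tight_rect c b : (forall i, dotv c (pt i) <= b) ->
  exists (E : {set bool}) (J : {set 'I_n.+1}),
    forall e j, dotv c (pt (e, j)) = b <-> (e \in E /\ j \in J).
Proof.
move=> valid; set g := dotv c vertical.
have top j : dotv c (pt (true, j)) = dotv c (pt (false, j)) + (lam - 2 * t j ^+ (2 * k + 2)) * g.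
  by rewrite psn_vertical_edge dotvD dotvZ.
have not_tight e j : dotv c (pt (e, j)) < dotv c (pt (~~ e, j)) -> dotv c (pt (e, j)) <> b.
  by move=> lt eb; move: (lt_le_trans lt (valid (~~ e, j))); rewrite eb ltxx.
case: (ltgtP g 0) => g_sgn.
- exists [set false], [set j | dotv c (pt (false, j)) == b] => -[] j; rewrite !inE /=.
    split=> [/not_tight[]|[]//]; by rewrite top gtrDl pmulr_rlt0 ?psn_edge_length.
  by split=> [->|[_ /eqP]]; rewrite ?eqxx.
- exists [set true], [set j | dotv c (pt (true, j)) == b] => -[] j; rewrite !inE /=.
    by split=> [->|[_ /eqP]]; rewrite ?eqxx.
  split=> [/not_tight[]|[]//]; by rewrite top ltrDl pmulr_rgt0 ?psn_edge_length.
- exists setT, [set j | dotv c (pt (false, j)) == b] => e j; rewrite !inE /=.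
  have -> : dotv c (pt (e, j)) = dotv c (pt (false, j)) by case: e; rewrite // top g_sgn mulr0 addr0.
  by split=> [->|[_ /eqP]]; rewrite ?eqxx.
Qed.

Lemma psn_faces_good : faces_good k (@small_rect k n) pt.
Proof.
exact: (faces_good_of_rect psn_level_indep psn_corner_indep psn_tight_rect).
Qed.

Hypothesis t_le_max : forall j, t j <= t ord_max.

(* A square of a polynomial of degree |J| + r vanishing on the t_j, j in J, and
   elsewhere only beyond t_max: nonnegative on all t_j, zero exactly on J. *)
Lemma square_poly (J : {set 'I_n.+1}) (r : nat) : exists g : {poly R},
  [/\ size g = (2 * (#|J| + r)).+1, g`_(2 * (#|J| + r)) = 1,
      forall j, 0 <= g.[t j] & forall j, g.[t j] = 0 <-> j \in J].
Proof.
pose a := t ord_max + 1.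
pose h := \prod_(x <- [seq t j | j <- enum J] ++ nseq r a) ('X - x%:P).
have size_h : size h = (#|J| + r).+1.
  by rewrite size_prod_XsubC size_cat size_map size_nseq cardE.
have h_monic : h \is monic by apply: monic_prod_XsubC.
have size_hh : size (h * h) = (2 * (#|J| + r)).+1.
  by rewrite size_mul ?monic_neq0 // size_h; lia.
exists (h * h); split=> // [|j|j].
- by have := lead_coefE (h * h); rewrite size_hh lead_coefM (monicP h_monic) mulr1 => <-.
- by rewrite hornerM -expr2 sqr_ge0.
- rewrite hornerM; split=> [/eqP|jJ]; last first.
    by apply/eqP; rewrite mulf_eq0 orbb -/(root _ _) root_prod_XsubC mem_cat map_f ?mem_enum.
  rewrite mulf_eq0 orbb -/(root _ _) root_prod_XsubC mem_cat mem_nseq.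
  case/orP=> [/mapP[j' j'J /t_inj ->]|/andP[_ /eqP tja]]; first by rewrite -mem_enum.
  by have := t_le_max j; rewrite tja /a gerDl ler10.
Qed.

(* A small rectangle meeting both levels has |J| <= k; it is cut out by a
   square polynomial of degree 2k, which does not see the last coordinate. *)
Lemma psn_expose_both (J : {set 'I_n.+1}) (S : bool * 'I_n.+1 -> Prop) :
  (#|J| <= k)%N -> (forall e j, S (e, j) <-> e \in [set: bool] /\ j \in J) -> exposes pt S.
Proof.
move=> card_J SEJ.
have [g [size_g _ g_ge0 g_J]] := square_poly J (k - #|J|).
rewrite subnKC // in size_g.
have g_top : g`_(2 * k + 2) = 0 by rewrite nth_default // size_g; lia.
exists (poly_functional (- g) 0), g`_0.
apply: (expose_rect (g := fun j => g.[t j]) (h := fun _ _ => 0) (E := setT) (J := J)) => //.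
move=> e j; rewrite dot_poly_functional; last by rewrite size_polyN size_g; lia.
by rewrite hornerN !coefN g_top; ring.
Qed.

(* A small rectangle on the level e0 has |J| <= k+1; it is cut out by a monic
   square polynomial of degree 2k+2, corrected by +-(last coordinate) so that
   the other level lies strictly below by the edge length. *)
Lemma psn_expose_level (e0 : bool) (J : {set 'I_n.+1}) (S : bool * 'I_n.+1 -> Prop) :
  (#|J| <= k.+1)%N -> (forall e j, S (e, j) <-> e \in [set e0] /\ j \in J) -> exposes pt S.
Proof.
move=> card_J SEJ.
have [g [size_g g_lead g_ge0 g_J]] := square_poly J (k.+1 - #|J|).
rewrite subnKC // in size_g g_lead.
have g_top : g`_(2 * k + 2) = 1 by rewrite -g_lead; congr (_`_ _); lia.
exists (poly_functional (- g) (if e0 then 1 else -1)), (g`_0 + if e0 then lam else 0).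
apply: (expose_rect (g := fun j => g.[t j])
  (h := fun e j => if e == e0 then 0 else lam - 2 * t j ^+ (2 * k + 2)) (E := [set e0]) (J := J)) => //.
- by move=> e j; case: eqP => // _; apply/ltW/psn_edge_length.
- move=> e j; rewrite inE; case: eqP => // _; split=> // edge0.
  by have := psn_edge_length j; rewrite edge0 ltxx.
- move=> e j; rewrite dot_poly_functional; last by rewrite size_polyN size_g; lia.
  by rewrite hornerN !coefN g_top; case: e; case: e0 {SEJ} => /=; ring.
Qed.

Lemma psn_good_faces : good_faces k (@small_rect k n) pt.
Proof.
apply: (good_faces_of_expose (w := vertical) _ psn_expose_both psn_expose_level) => j.
by rewrite psn_vertical_edge addrAC subrr add0r scalemx_sub.
Qed.

End MomentPolytope.

Section Prism.
Variables (R : realFieldType) (k n : nat).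

(* (e, j) |-> (e; u_j) where u_0 = 0 and u_1, ..., u_n is the standard basis
   of R^n: the vertices of Δ_1 × Δ_n. *)
Definition prism_vertex (p : bool * 'I_n.+1) : 'rV[R]_(1 + n) :=
  row_mx (\row_(i < 1) (p.1)%:R) (\row_(i < n) (lift ord0 i == p.2)%:R).

Definition prism_functional (a : R) (f : 'I_n.+1 -> R) : 'rV[R]_(1 + n) :=
  row_mx (\row_(i < 1) a) (\row_(i < n) (f (lift ord0 i) - f ord0)).

Lemma dot_prism a f (e : bool) (j : 'I_n.+1) :
  dotv (prism_functional a f) (prism_vertex (e, j)) = a * e%:R + (f j - f ord0).
Proof.
rewrite dotv_row_mx /dotv big_ord1 !mxE; congr (_ + _).
case: (unliftP ord0 j) => [j' ->|->].
  by under eq_bigr do rewrite !mxE (inj_eq lift_inj); rewrite sum_mul_delta.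
by rewrite subrr big1 // => i _; rewrite !mxE eq_sym (negbTE (neq_lift _ _)) mulr0.
Qed.

Lemma prism_parallelogram e e' j j' :
  prism_vertex (e, j) + prism_vertex (e', j') = prism_vertex (e, j') + prism_vertex (e', j).
Proof. by rewrite /prism_vertex !add_row_mx /= [X in row_mx _ X]addrC. Qed.

Definition prism_at (j : 'I_n.+1) := prism_functional 0 (fun i => (i == j)%:R).
Definition prism_level := prism_functional 1 (fun=> 0).

Lemma dot_prism_at j e j' :
  dotv (prism_at j) (prism_vertex (e, j')) = (j' == j)%:R - (ord0 == j)%:R.
Proof. by rewrite dot_prism mul0r add0r. Qed.

Lemma dot_prism_level e j : dotv prism_level (prism_vertex (e, j)) = e%:R.
Proof. by rewrite dot_prism mul1r subrr addr0. Qed.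

Lemma prism_level_indep : level_indep k prism_vertex.
Proof.
move=> e s s_inj.
have s_eq (a b : 'I_k.+1) : (s a.+1 == s b.+1) = (a == b :> nat).
  by rewrite (inj_upto_eq s_inj); rewrite ?ltnS ?leq_ord.
have s0 (a : 'I_k.+1) : (s 0%N == s a.+1) = false.
  by rewrite (inj_upto_eq s_inj); rewrite ?ltnS ?leq_ord.
have phi (l l' : 'I_k.+1) : dotv (prism_at (s l.+1))
    (prism_vertex (e, s (lift ord0 l')) - prism_vertex (e, s ord0)) = (l' == l :> nat)%:R.
  by rewrite dotvB !dot_prism_at lift0 s_eq s0 /= sub0r opprK subrK.
apply: (aff_indep_triangular (phi := fun l : 'I_k.+1 => prism_at (s l.+1))).
- by move=> l l' ll'; rewrite phi gtn_eqF.
- by move=> l; rewrite phi eqxx oner_eq0.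
Qed.

Lemma prism_corner_indep : corner_indep k prism_vertex.
Proof.
move=> s s_inj.
have s_eq (a b : nat) : (a < k)%N -> (b < k)%N -> (s a.+1 == s b.+1) = (a == b).
  by move=> ak bk; rewrite (inj_upto_eq s_inj).
have s0 (a : nat) : (a < k)%N -> (s 0%N == s a.+1) = false.
  by move=> ak; rewrite (inj_upto_eq s_inj).
(* phi_l detects the vertices above s (l+1) for l < k, and the level for l = k *)
apply: (aff_indep_triangular (phi := fun l : 'I_k.+1 =>
  if (l < k)%N then prism_at (s l.+1) else prism_level)).
- move=> l l' ll'; have lk : (l < k)%N by apply: leq_trans ll' (ltn_ord l').
  rewrite lift0 /= lk eqSS dotvB.
  case: eqP => [_|/eqP l'k]; rewrite !dot_prism_at; first by rewrite subrr.
  have l'_lt : (l' < k)%N by have := ltn_ord l'; lia.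
  by rewrite s_eq // s0 // gtn_eqF //= subrr.
- move=> l; rewrite lift0 /= eqSS dotvB; case: ifP => lk.
    rewrite (ltn_eqF lk) !dot_prism_at s_eq // s0 // eqxx /=.
    by rewrite sub0r opprK subrK oner_eq0.
  have -> : l == k :> nat by have := ltn_ord l; move/negbT: lk; lia.
  by rewrite !dot_prism_level subr0 oner_eq0.
Qed.

(* By the parallelogram identity, the tight set of a valid inequality is the
   product of its sections through any tight vertex (e0, j0). *)
Lemma prism_tight_rect c b : (forall i, dotv c (prism_vertex i) <= b) ->
  exists (E : {set bool}) (J : {set 'I_n.+1}),
    forall e j, dotv c (prism_vertex (e, j)) = b <-> (e \in E /\ j \in J).
Proof.
move=> valid.
case: (pickP (fun p => dotv c (prism_vertex p) == b)) => [[e0 j0] /eqP tight0|none]; last first.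
  exists set0, set0 => e j; rewrite !inE; split=> [eb|[]//].
  by move: (none (e, j)); rewrite eb eqxx.
exists [set e | dotv c (prism_vertex (e, j0)) == b], [set j | dotv c (prism_vertex (e0, j)) == b].
move=> e j; rewrite !inE.
have sum_eq : dotv c (prism_vertex (e, j)) + dotv c (prism_vertex (e0, j0)) =
              dotv c (prism_vertex (e, j0)) + dotv c (prism_vertex (e0, j)).
  by rewrite -!dotvD prism_parallelogram.
have le_ej0 := valid (e, j0); have le_e0j := valid (e0, j); rewrite tight0 in sum_eq.
split=> [ej_tight|[/eqP ej0 /eqP e0j]]; last by lra.
by split; apply/eqP; lra.
Qed.

Lemma prism_faces_good : faces_good k (@small_rect k n) prism_vertex.
Proof.
exact: (faces_good_of_rect prism_level_indep prism_corner_indep prism_tight_rect).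
Qed.

Lemma prism_slack_J (J : {set 'I_n.+1}) j : 0 <= 1 - ((j \in J)%:R : R).
Proof. by case: (j \in J); rewrite ?subrr ?subr0 ?ler01. Qed.

Lemma prism_slack_J0 (J : {set 'I_n.+1}) j : 1 - ((j \in J)%:R : R) = 0 <-> j \in J.
Proof. by case: (j \in J); rewrite ?subrr ?subr0; split=> // /eqP; rewrite oner_eq0. Qed.

(* Every rectangle E × J is exposed by a functional detecting J, plus or minus
   the level when E is a single level. *)
Lemma prism_expose_both (J : {set 'I_n.+1}) (S : bool * 'I_n.+1 -> Prop) :
  (forall e j, S (e, j) <-> e \in [set: bool] /\ j \in J) -> exposes prism_vertex S.
Proof.
move=> SEJ; pose f j := ((j \in J)%:R : R).
exists (prism_functional 0 f), (1 - f ord0).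
apply: (expose_rect (g := fun j => 1 - f j) (h := fun _ _ => 0) (E := setT) (J := J)) => //.
- exact: prism_slack_J.
- exact: prism_slack_J0.
- by move=> e j; rewrite dot_prism; ring.
Qed.

Lemma prism_expose_level (e0 : bool) (J : {set 'I_n.+1}) (S : bool * 'I_n.+1 -> Prop) :
  (forall e j, S (e, j) <-> e \in [set e0] /\ j \in J) -> exposes prism_vertex S.
Proof.
move=> SEJ; pose f j := ((j \in J)%:R : R).
exists (prism_functional (if e0 then 1 else -1) f), (1 - f ord0 + (if e0 then 1 else 0)).
apply: (expose_rect (g := fun j => 1 - f j) (h := fun e _ => if e == e0 then 0 else 1)
  (E := [set e0]) (J := J)) => //.
- exact: prism_slack_J.
- exact: prism_slack_J0.
- by move=> e j; case: eqP => // _; rewrite ler01.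
- by move=> e j; rewrite inE; case: eqP => // _; split=> // /eqP; rewrite oner_eq0.
- by move=> e j; rewrite dot_prism; case: e; case: e0 {SEJ} => /=; ring.
Qed.

(* every small rectangle indexes an exposed face of Δ_1 × Δ_n of dimension <= k;
   all vertical edges equal the first one by the parallelogram identity *)
Lemma prism_good_faces : good_faces k (@small_rect k n) prism_vertex.
Proof.
apply: (good_faces_of_expose (w := prism_vertex (true, ord0) - prism_vertex (false, ord0))).
- move=> j; rewrite (_ : _ - _ = prism_vertex (true, ord0) - prism_vertex (false, ord0)) //.
  by apply/eqP; rewrite subr_eq addrAC -prism_parallelogram addrK.
- by move=> J S _; apply: prism_expose_both.
- by move=> e0 J S _; apply: prism_expose_level.
Qed.

End Prism.

Lemma comb_unit_interval (R : realFieldType) (I : finType) (w F : I -> R) :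
  (forall i, 0 <= w i) -> \sum_i w i = 1 -> (forall i, 0 <= F i <= 1) ->
  0 <= \sum_i w i * F i <= 1.
Proof.
move=> w0 w1 F01; apply/andP; split.
  by apply: sumr_ge0 => i _; apply: mulr_ge0 => //; case/andP: (F01 i).
by rewrite -w1; apply: ler_sum => i _; rewrite ler_piMr //; case/andP: (F01 i).
Qed.

Section PrismHull.
Variables (R : realFieldType) (n : nat).
Local Notation pv := (@prism_vertex R n).

Lemma comb_prism_lsub (w : bool * 'I_n.+1 -> R) :
  lsubmx (\sum_p w p *: pv p) 0 ord0 = \sum_p w p * (p.1)%:R.
Proof. by rewrite mxE summxE; apply: eq_bigr => p _; rewrite mxE /prism_vertex row_mxEl mxE. Qed.

Lemma comb_prism_rsub (w : bool * 'I_n.+1 -> R) i :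
  rsubmx (\sum_p w p *: pv p) 0 i = \sum_p w p * (lift ord0 i == p.2)%:R.
Proof. by rewrite mxE summxE; apply: eq_bigr => p _; rewrite mxE /prism_vertex row_mxEr mxE. Qed.

Lemma sum_lift_delta (j : 'I_n.+1) : \sum_(i < n) ((lift ord0 i == j)%:R : R) = (j != ord0)%:R.
Proof.
case: (unliftP ord0 j) => [j' ->|->]; last first.
  by rewrite eqxx big1 // => i _; rewrite eq_sym (negbTE (neq_lift _ _)).
by under eq_bigr do rewrite (inj_eq lift_inj); rewrite sum_delta eq_sym neq_lift.
Qed.

Lemma conv_prism_sub x : conv pv x -> @prod_simplex R 1 n x.
Proof.
case=> w [w0 w1 ->].
have in01 (F : bool * 'I_n.+1 -> R) := comb_unit_interval w0 w1 (F := F).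
have b01 (b : bool) : 0 <= (b%:R : R) <= 1 by case: b; rewrite ?ler01 ?lexx.
have sum_r : \sum_(i < n) rsubmx (\sum_p w p *: pv p) 0 i = \sum_p w p * (p.2 != ord0)%:R.
  under eq_bigr do rewrite comb_prism_rsub.
  rewrite exchange_big /=; apply: eq_bigr => p _.
  by rewrite -mulr_sumr sum_lift_delta.
split; split.
- by move=> i; rewrite ord1 comb_prism_lsub; case/andP: (in01 _ (fun p => b01 p.1)).
- by rewrite big_ord1 comb_prism_lsub; case/andP: (in01 _ (fun p => b01 p.1)).
- by move=> i; rewrite comb_prism_rsub; case/andP: (in01 _ (fun p => b01 (lift ord0 i == p.2))).
- by rewrite sum_r; case/andP: (in01 _ (fun p => b01 (p.2 != ord0))).
Qed.

Lemma sum_prod_weights (Y F : bool -> R) (Z G : 'I_n.+1 -> R) :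
  \sum_p (Y p.1 * Z p.2) * (F p.1 * G p.2) = (\sum_e Y e * F e) * (\sum_j Z j * G j).
Proof.
rewrite mulr_suml -(pair_bigA _ (fun e j => (Y e * Z j) * (F e * G j))) /=.
apply: eq_bigr => e _.
by rewrite mulr_sumr; apply: eq_bigr => j _; ring.
Qed.

(* A point (y; z) of Δ_1 × Δ_n is the combination of the vertices with the
   product weights of (1 - y, y) and (1 - sum z, z). *)
Lemma conv_prism_sup x : @prod_simplex R 1 n x -> conv pv x.
Proof.
case=> [[y0 y1] [z0 z1]]; rewrite big_ord1 in y1; have {}y0 := y0 ord0.
set y := lsubmx x 0 ord0 in y0 y1 *; set z := rsubmx x 0 in z0 z1 *.
pose Y (e : bool) := if e then y else 1 - y.
pose Z (j : 'I_n.+1) := if unlift ord0 j is Some i then z i else 1 - \sum_i z i.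
have Z_lift i : Z (lift ord0 i) = z i by rewrite /Z liftK.
have sumY : \sum_e Y e = 1 by rewrite big_bool /Y /=; ring.
have sumZ : \sum_j Z j = 1.
  by rewrite big_ord_recl; under eq_bigr do rewrite Z_lift; rewrite /Z unlift_none subrK.
have sum1 (I : finType) (F : I -> R) : \sum_i F i * 1 = \sum_i F i.
  by apply: eq_bigr => i _; rewrite mulr1.
exists (fun p => Y p.1 * Z p.2); split.
- move=> [e j]; apply: mulr_ge0; first by case: e; rewrite /Y /= ?subr_ge0.
  by rewrite /Z; case: (unliftP ord0 j) => [j' _|_]; [apply: z0|rewrite subr_ge0].
- have := sum_prod_weights Y (fun=> 1) Z (fun=> 1).
  by rewrite !sum1 sumY sumZ mulr1 => <-; apply: eq_bigr => p _; rewrite mulr1.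
- rewrite -[x]hsubmxK -[RHS]hsubmxK; congr row_mx; apply/rowP => i.
    rewrite ord1 comb_prism_lsub -[LHS]/y.
    have sumY1 : \sum_e Y e * e%:R = y by rewrite big_bool /Y /= mulr1 mulr0 addr0.
    have := sum_prod_weights Y (fun e => e%:R) Z (fun=> 1).
    rewrite sum1 sumZ mulr1 sumY1 => <-.
    by apply: eq_bigr => p _; rewrite mulr1.
  rewrite comb_prism_rsub -[LHS]/(z i) -Z_lift -(sum_mul_delta Z (lift ord0 i)).
  have := sum_prod_weights Y (fun=> 1) Z (fun j => (j == lift ord0 i)%:R).
  rewrite sum1 sumY mul1r => <-.
  by apply: eq_bigr => p _; rewrite mul1r eq_sym.
Qed.

Lemma conv_prism : eq_p (conv pv) (@prod_simplex R 1 n).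
Proof. by move=> x; split; [apply: conv_prism_sub|apply: conv_prism_sup]. Qed.

End PrismHull.

Section Increasing.
Variables (R : realFieldType) (n : nat) (t : 'I_n.+1 -> R).
Hypothesis t_incr : forall i j : 'I_n.+1, (i < j)%N -> t i < t j.

Lemma incr_inj : injective t.
Proof.
move=> i j tij; apply: val_inj; case: (ltngtP i j) => // ij.
  by move: (t_incr ij); rewrite tij ltxx.
by move: (t_incr ij); rewrite tij ltxx.
Qed.

Lemma incr_le_max j : t j <= t ord_max.
Proof.
case: (ltngtP j (@ord_max n)) => [jm|mj|/val_inj -> //]; first exact/ltW/t_incr.
by move: (leq_ord j); rewrite leqNgt mj.
Qed.

End Increasing.

Lemma eventually_above (R : realFieldType) (I : finType) (a : I -> R) :
  exists lam0 : R, forall lam, lam0 <= lam -> forall i, a i < lam.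
Proof.
exists (1 + \sum_i `|a i|) => lam lam0_le i.
have a_le := ler_norm (a i).
have other : 0 <= \sum_(j | j != i) `|a j| by apply: sumr_ge0.
rewrite (bigD1 i) //= in lam0_le; lra.
Qed.

Unset Implicit Arguments.
Set Strict Implicit.

Theorem proposition2p3 (R : realFieldType) (k n : nat) (t : 'I_n.+1 -> R) :
  (2 * k + 2 <= n)%N ->
  (forall i j : 'I_n.+1, (i < j)%N -> t i < t j) ->
  exists lam0 : R, forall lam : R, lam0 <= lam ->
    has_dim (conv (psn_points k t lam)) (2 * k + 2) /\
    skel_equiv k (conv (psn_points k t lam)) (@prod_simplex R 1 n).
Proof.
move=> kn t_incr.
have t_inj := incr_inj t_incr; have t_le_max := incr_le_max t_incr.
have [lam0 lam0_large] := eventually_above (fun j => 2 * t j ^+ (2 * k + 2)).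
exists lam0 => lam /lam0_large lam_large; split; first exact: psn_has_dim.
apply: (skel_equiv_of_good (psn_faces_good t_inj lam_large)
                           (psn_good_faces t_inj lam_large t_le_max)
                           (@prism_faces_good R k n) (@prism_good_faces R k n)).
exact: conv_prism.
Qed.
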